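(* Let $\mu=\mu_\beta$ be a central state of a model in the class described in the context, and let $\beta_0>0$ and $p_1^0(\beta,u,U,d)>0$ be such that for $\beta>\beta_0$ and $p_1(\mu)<p_1^0$ one has $\mu\otimes\mu(\{(\omega,\omega'):\pi(\cdot\mid\omega)\perp\pi(\cdot\mid\omega')\})=1$ (such constants exist). Then for such $\beta$ and $\mu$, the extremal decomposition measure $\alpha_\mu$ of $\mu$ has no atoms: $\alpha_\mu(\{\nu\})=0$ for every $\nu\in{\rm ex}\,\mathcal G(\gamma)$. In particular uncountably many extremal Gibbs measures enter the extremal decomposition of $\mu$.
   Context: Let $d\ge 2$, $\mathcal T^d=(V,E)$ the Cayley tree in which every vertex has $d+1$ neighbours, $q\ge2$, $\Omega=\mathbb Z_q^V$ with product $\sigma$-algebra $\mathcal F$. Model: formal Hamiltonian $H(\omega)=\sum_{\{v,w\}\in E}u_{\omega_v,\omega_w}+\sum_v\Psi(\omega_v)$, $(u_{i,j})$ symmetric, $u_{i,i}=0$, $0<u:=\min_{i\neq j}u_{i,j}\le\max u_{i,j}=:U$, $\|\Psi\|_\infty\le u(d-1)/8$. Gibbs specification $\gamma$: $\gamma_\Lambda(\omega_\Lambda\mid\omega_{\Lambda^c})=(Z^\omega_\Lambda)^{-1}\prod_{\{v,w\}\cap\Lambda\neq\emptyset}Q(\omega_v,\omega_w)$, $Q(i,j)=e^{-\beta(u_{i,j}+(\Psi(i)+\Psi(j))/(d+1))}$. $\mathcal G(\gamma)$ is the convex set of Gibbs measures (solutions of the DLR equations), ${\rm ex}\,\mathcal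 G(\gamma)$ its extreme points, equipped with the evaluation $\sigma$-algebra (generated by $\nu\mapsto\nu(A)$, $A\in\mathcal F$). Central state: let $Q_0(i,j)=g(i-j)$, $g$ even strictly positive, $\sum_jg(j)=1$, no eigenvalue of $Q_0$ equal to $1/d$; for $Q$ near $Q_0$ there is a $C^1$ solution $\bar x(Q)>0$ of $x(i)=\sum_jQ(i,j)x(j)^d$ with $\bar x(Q_0)\equiv1$. If the model's transfer matrix is a positive multiple of such $Q$, the central state is the Gibbs measure which is the homogeneous tree-indexed Markov chain with marginal $\propto\bar x^{d+1}$ and transition matrix $P(i,j)=Q(i,j)\bar x(j)^d/\sum_kQ(i,k)\bar x(k)^d$. $p_1(\mu)=\max_i\sum_{j\neq i}P(i,j)$. $\pi(\cdot\mid\omega)=\lim_{\Lambda\uparrow V}\gamma_\Lambda(\cdot\mid\omega)$ if the limit exists for all cylinder events, a fixed arbitrary probability measure otherwise; for $\mu$-a.e. $\omega$ it is an extremal Gibbs measure. The extremal decomposition measure is $\alpha_\mu(M)=\mu(\{\omega:\pi(\cdot\mid\omega)\in M\})$ for measurable $M\subset{\rm ex}\,\mathcal G(\gamma)$, so that $\mu=\int\nu\,\alpha_\mu(d\nu)$. *)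

From HB Require Import structures.
From mathcomp Require Import all_boot all_order all_algebra.
From mathcomp Require Import all_classical all_reals all_analysis.

Set Implicit Arguments.
Unset Strict Implicit.
Unset Printing Implicit Defensive.

Import Order.TTheory GRing.Theory Num.Theory.
Import numFieldNormedType.Exports.

Local Open Scope classical_set_scope.
Local Open Scope ring_scope.

(* The Cayley tree T^d (every vertex has d+1 neighbours), realised as the    *)
(* Cayley graph of the free product of d+1 copies of Z/2: vertices are the   *)
(* reduced words over the alphabet 'I_(d+1) (no two consecutive equal        *)
(* letters); the root is the empty word.  Every edge is {parent c, c} for a  *)
(* unique non-root vertex c, where parent c is c with its last letter        *)
(* removed.                                                                  *)

Definition reduced d (s : seq 'I_d.+1) : bool := sorted (fun a b => a != b) s.

Definition vertex d := {s : seq 'I_d.+1 | reduced s}.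

Definition root d : vertex d := exist (fun s => reduced s) [::] isT.

Definition parent d (v : vertex d) : vertex d :=
  insubd (root d) (take (size (val v)).-1 (val v)).

Definition children d (v : vertex d) : seq (vertex d) :=
  pmap (fun s => insub s : option (vertex d))
       [seq rcons (val v) a | a <- enum 'I_d.+1].

Definition neighbours d (v : vertex d) : seq (vertex d) :=
  (if val v == [::] then [::] else [:: parent v]) ++ children v.

Fixpoint sphere d (n : nat) : seq (vertex d) :=
  if n is n'.+1 then flatten [seq children v | v <- sphere d n'] else [:: root d].

Definition ball_tree d (n : nat) : seq (vertex d) :=
  flatten [seq sphere d k | k <- iota 0 n.+1].

(* Edges meeting a finite set Lam, each represented by its child end. *)
Definition edges_meeting d (Lam : seq (vertex d)) : seq (vertex d) :=
  undup (flatten [seq (if val v == [::] then [::] else [:: v]) ++ children v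
                 | v <- Lam]).

Definition config d q := vertex d -> 'Z_q.

HB.instance Definition _ q := isPointed.Build 'Z_q 0%R.
HB.instance Definition _ d q := Pointed.on (config d q).

Definition restr d q (Lam : seq (vertex d)) (w : config d q)
  : {ffun seq_sub Lam -> 'Z_q} := [ffun x => w (val x)].

Definition cylinder d q (C : set (config d q)) : Prop :=
  exists (Lam : seq (vertex d)) (B : set {ffun seq_sub Lam -> 'Z_q}),
    C = [set w | B (restr Lam w)].

Definition Omega d q := g_sigma_algebraType (@cylinder d q).
HB.instance Definition _ d q := Measurable.on (Omega d q).

Definition glue d q (Lam : seq (vertex d)) (eta : {ffun seq_sub Lam -> 'Z_q})
  (w : Omega d q) : Omega d q :=
  fun v => match (insub v : option (seq_sub Lam)) with
           | Some x => eta x | None => w v end.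

Definition Qmodel (R : realType) d q (u : 'Z_q -> 'Z_q -> R) (Psi : 'Z_q -> R)
  (beta : R) (i j : 'Z_q) : R :=
  expR (- (beta * (u i j + (Psi i + Psi j) / (d.+1)%:R))).

Definition weight (R : realType) d q (Q : 'Z_q -> 'Z_q -> R)
  (Lam : seq (vertex d)) (w : Omega d q) : R :=
  \prod_(c <- edges_meeting Lam) Q (w (parent c)) (w c).

Definition gamma (R : realType) d q (Q : 'Z_q -> 'Z_q -> R)
  (Lam : seq (vertex d)) (A : set (Omega d q)) (w : Omega d q) : R :=
  (\sum_(eta : {ffun seq_sub Lam -> 'Z_q})
      weight Q Lam (glue eta w) * \1_A (glue eta w))
  / (\sum_(eta : {ffun seq_sub Lam -> 'Z_q}) weight Q Lam (glue eta w)).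

Definition meq (R : realType) d q (m1 m2 : probability (Omega d q) R) : Prop :=
  forall A, measurable A -> m1 A = m2 A.

Definition is_gibbs (R : realType) d q (Q : 'Z_q -> 'Z_q -> R)
  (mu : probability (Omega d q) R) : Prop :=
  forall (Lam : seq (vertex d)) (A : set (Omega d q)), measurable A ->
    mu A = (\int[mu]_w (gamma Q Lam A w)%:E)%E.

Definition extremal_gibbs (R : realType) d q (Q : 'Z_q -> 'Z_q -> R)
  (nu : probability (Omega d q) R) : Prop :=
  is_gibbs Q nu /\
  forall (t : R) (nu1 nu2 : probability (Omega d q) R),
    0 < t < 1 -> is_gibbs Q nu1 -> is_gibbs Q nu2 ->
    (forall A, measurable A -> nu A = (t%:E * nu1 A + (1 - t)%:E * nu2 A)%E) ->
    meq nu1 nu2.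

(* gamma_Lam(C | w) --> l as Lam increases to V (net of finite sets
   directed by inclusion) *)
Definition conv_to (R : realType) d q (Q : 'Z_q -> 'Z_q -> R)
  (w : Omega d q) (C : set (Omega d q)) (l : R) : Prop :=
  forall e : R, 0 < e -> exists Lam0 : seq (vertex d),
    forall Lam : seq (vertex d), {subset Lam0 <= Lam} ->
      `|gamma Q Lam C w - l| < e.

Definition lim_exists (R : realType) d q (Q : 'Z_q -> 'Z_q -> R)
  (w : Omega d q) : Prop :=
  forall C, cylinder C -> exists l : R, conv_to Q w C l.

(* pi_is rho w nu  :<->  pi(. | w) = nu, where pi(.|w) is the limit of
   gamma_Lam(.|w) on cylinder events if it exists for all of them, and the
   fixed arbitrary probability measure rho otherwise. *)
Definition pi_is (R : realType) d q (Q : 'Z_q -> 'Z_q -> R)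
  (rho : probability (Omega d q) R) (w : Omega d q)
  (nu : probability (Omega d q) R) : Prop :=
  (lim_exists Q w /\ forall C, cylinder C -> conv_to Q w C (fine (nu C)))
  \/ (~ lim_exists Q w /\ meq nu rho).

Definition singular (R : realType) d q (nu nu' : probability (Omega d q) R)
  : Prop :=
  exists A, measurable A /\ nu A = 1%E /\ nu' A = 0%E.

Definition Q0 (R : realType) q (g : 'Z_q -> R) : 'M[R]_((Zp_trunc q).+2) :=
  \matrix_(i, j) g (i - j).

(* C^1 on an open set N: differentiable at each point of N, with every
   directional derivative continuous on N (finite dimensions). *)
Definition C1_on (R : realType) (U W : normedModType R) (N : set U)
  (f : U -> W) : Prop :=
  (forall x, N x -> differentiable f x) /\
  (forall v : U, forall x, N x -> {for x, continuous ('D_v f)}).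

(* homogeneous tree-indexed Markov chain with marginal m and transition P:
   cylinder probabilities on the balls around the root *)
Definition is_tree_markov (R : realType) d q (mu : probability (Omega d q) R)
  (m : 'Z_q -> R) (P : 'Z_q -> 'Z_q -> R) : Prop :=
  forall (n : nat) (eta : Omega d q),
    mu [set w : Omega d q | forall v, v \in ball_tree d n -> w v = eta v] =
    (m (eta (root d)) *
     \prod_(c <- ball_tree d n | val c != [::]) P (eta (parent c)) (eta c))%:E.

Definition central_state (R : realType) d q (u : 'Z_q -> 'Z_q -> R)
  (Psi : 'Z_q -> R) (beta : R) (mu : probability (Omega d q) R)
  (P : 'Z_q -> 'Z_q -> R) : Prop :=
  is_gibbs (Qmodel d u Psi beta) mu /\
  exists g : 'Z_q -> R,
    (forall k, g (- k) = g k) /\ (forall k, 0 < g k) /\ (\sum_k g k = 1) /\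
    ~~ eigenvalue (Q0 g) (d%:R)^-1 /\
    exists (r : R) (xbar : 'M[R]_((Zp_trunc q).+2) -> 'rV[R]_((Zp_trunc q).+2)),
      0 < r /\
      C1_on (ball (Q0 g) r) xbar /\
      xbar (Q0 g) = const_mx 1 /\
      (forall Q, ball (Q0 g) r Q ->
         (forall i, 0 < xbar Q 0 i) /\
         (forall i, xbar Q 0 i = \sum_j Q i j * xbar Q 0 j ^+ d)) /\
      exists (c : R) (Q : 'M[R]_((Zp_trunc q).+2)),
        0 < c /\ ball (Q0 g) r Q /\
        (forall i j, Qmodel d u Psi beta i j = c * Q i j) /\
        let x := fun i => xbar Q 0 i in
        (forall i j, P i j = Q i j * x j ^+ d / \sum_k Q i k * x k ^+ d) /\
        is_tree_markov mu (fun i => x i ^+ d.+1 / \sum_k x k ^+ d.+1) P.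

Definition p1 (R : realType) q (P : 'Z_q -> 'Z_q -> R) : R :=
  \big[Num.max/0]_(i : 'Z_q) \sum_(j : 'Z_q | j != i) P i j.

From HB Require Import structures.
From mathcomp Require Import all_boot all_order all_algebra.
From mathcomp Require Import all_classical all_reals all_analysis.
From mathcomp Require Import measurable_realfun.

Set Implicit Arguments.
Unset Strict Implicit.
Unset Printing Implicit Defensive.

Import Order.TTheory GRing.Theory Num.Theory.
Import numFieldNormedType.Exports.
Local Open Scope classical_set_scope.
Local Open Scope ring_scope.

(* If the event {w | pi(.|w) = nu} had positive mu-measure, its square would
   have positive mu (x) mu-measure, and on that square pi(.|w) = pi(.|w') = nu,
   which is not singular to itself.  Hence alpha_mu has no atoms, and a
   countable set of extremal measures only carries a countable union of
   mu-null events, which cannot have full measure. *)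

Lemma negligible_setX d1 d2 (T1 : measurableType d1) (T2 : measurableType d2)
    (R : realType) (m1 : {measure set T1 -> \bar R})
    (m2 : {sigma_finite_measure set T2 -> \bar R}) (S1 : set T1) (S2 : set T2) :
  (m1 \x m2)%E.-negligible (S1 `*` S2) -> m1.-negligible S1 \/ m2.-negligible S2.
Proof.
move=> [N [mN N0 SN]].
have mxN : measurable_fun setT (m2 \o xsection N) by exact: measurable_fun_xsection.
have int0 : (\int[m1]_x `|(m2 \o xsection N) x| = 0)%E.
  rewrite -N0 /product_measure1; apply: eq_integral => x _.
  by rewrite gee0_abs.
have [B [mB B0 xB]] := (ae_eq_integral_abs m1 measurableT mxN).1 int0.
have [[x S1x Bx]|S1B] := pselect (exists2 x, S1 x & ~ B x).
  right; exists (xsection N x); split; first exact: measurable_xsection.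
  - by apply: contrapT => xNn0; apply: Bx; apply: xB => /(_ I).
  - by move=> y S2y; rewrite /xsection /=; apply/mem_set; apply: SN.
left; exists B; split => // x S1x.
by apply: contrapT => Bx; apply: S1B; exists x.
Qed.

Lemma negligible_bigcup_countable d (T : measurableType d) (R : realType)
    (mu : {measure set T -> \bar R}) (I : Type) (M : set I) (F : I -> set T) :
  countable M -> (forall i, M i -> mu.-negligible (F i)) ->
  mu.-negligible (\bigcup_(i in M) F i).
Proof.
move=> /countable_injP [f finj] FM.
have Fn n : mu.-negligible (\bigcup_(i in [set i | M i /\ f i = n]) F i).
  have [[i Mi fi]|nofn] := pselect (exists2 i, M i & f i = n).
    apply: negligibleS (FM i Mi) => w [j [Mj fj] Fjw].
    by have -> : i = j by apply: finj; rewrite ?inE // fi fj.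
  apply: negligibleS (negligible_set0 mu) => w [j [Mj fj] _].
  by apply: nofn; exists j.
apply: negligibleS (negligible_bigcup Fn) => w [i Mi Fiw].
by exists (f i) => //; exists i.
Qed.

Section fibers.
Context d (T : measurableType d) (R : realType) (mu : probability T R).
Context (V : Type) (rel : T -> V -> Prop).

Lemma negligible_fiber_of_ae_separated :
  {ae (mu \x mu)%E, forall ww : T * T, forall v, rel ww.1 v -> rel ww.2 v -> False} ->
  forall v, mu.-negligible [set w | rel w v].
Proof.
move=> sep v.
suff : (mu \x mu)%E.-negligible ([set w | rel w v] `*` [set w | rel w v]).
  by case/negligible_setX.
by apply: negligibleS sep => ww [h1 h2] /= /(_ v h1 h2).
Qed.

Lemma not_ae_countable_cover (M : set V) :
  countable M -> (forall v, M v -> mu.-negligible [set w | rel w v]) ->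
  ~ {ae mu, forall w, exists2 v, M v & rel w v}.
Proof.
move=> cM fiber0 cover.
have covered0 := negligible_bigcup_countable cM fiber0.
have /(measure_negligible measurableT) : mu.-negligible setT.
  apply: negligibleS (negligibleU cover covered0) => w _.
  have [[v Mv wv]|] := pselect (exists2 v, M v & rel w v); last by left.
  by right; exists v.
move=> muT0; have := probability_setT mu.
by rewrite muT0 => -[] /eqP; rewrite eq_sym oner_eq0.
Qed.

End fibers.

Lemma not_singular_self (R : realType) d q (nu : probability (Omega d q) R) :
  ~ singular nu nu.
Proof. by move=> [A [_ [-> -[] /eqP]]]; rewrite oner_eq0. Qed.

Theorem corollary3p5 (R : realType) (d q : nat)
  (u : 'Z_q -> 'Z_q -> R) (Psi : 'Z_q -> R)
  (rho : probability (Omega d q) R) (beta0 : R) (p10 : R -> R) :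
  (1 < d)%N -> (1 < q)%N ->
  (forall i j, u i j = u j i) -> (forall i, u i i = 0) ->
  (forall i j, i != j -> 0 < u i j) ->
  (* ||Psi||_oo <= u (d-1)/8, u = min_{i<>j} u_{ij} *)
  (forall k i j, i != j -> `|Psi k| <= u i j * (d%:R - 1) / 8) ->
  0 < beta0 -> (forall beta, 0 < p10 beta) ->
  (forall (beta : R) (mu : probability (Omega d q) R) (P : 'Z_q -> 'Z_q -> R),
     beta0 < beta -> central_state u Psi beta mu P -> p1 P < p10 beta ->
     {ae (mu \x mu)%E, forall ww : Omega d q * Omega d q,
        forall nu nu' : probability (Omega d q) R,
          pi_is (Qmodel d u Psi beta) rho ww.1 nu ->
          pi_is (Qmodel d u Psi beta) rho ww.2 nu' ->
          singular nu nu'}) ->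
  forall (beta : R) (mu : probability (Omega d q) R) (P : 'Z_q -> 'Z_q -> R),
    beta0 < beta -> central_state u Psi beta mu P -> p1 P < p10 beta ->
    (* alpha_mu has no atoms: alpha_mu({nu}) = mu(pi(.|w) = nu) = 0 *)
    (forall nu : probability (Omega d q) R,
       extremal_gibbs (Qmodel d u Psi beta) nu ->
       mu.-negligible [set w : Omega d q | pi_is (Qmodel d u Psi beta) rho w nu])
    /\
    (* in particular no countable set of extremal Gibbs measures carries
       alpha_mu *)
    (forall M : set (probability (Omega d q) R), countable M ->
       (forall nu, M nu -> extremal_gibbs (Qmodel d u Psi beta) nu) ->
       ~ {ae mu, forall w : Omega d q,
            exists2 nu, M nu & pi_is (Qmodel d u Psi beta) rho w nu}).
Proof.
(* The model hypotheses only matter through the singularity hypothesis. *)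
move=> _ _ _ _ _ _ _ _ ae_singular beta mu P beta_gt cs p1_lt.
set pi := pi_is (Qmodel d u Psi beta) rho.
have atomless nu : mu.-negligible [set w | pi w nu].
  apply: negligible_fiber_of_ae_separated nu.
  apply: filterS (ae_singular beta mu P beta_gt cs p1_lt) => ww sep nu h1 h2.
  exact: not_singular_self (sep nu nu h1 h2).
split => [nu _|M cM _]; first exact: atomless.
by apply: not_ae_countable_cover cM _ => nu _; exact: atomless.
Qed.
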